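(* Assume that every intermediary $i\in\mathcal V$ satisfies $\sum_{j\in\delta_{\mathrm{in}}(i)}w_{ij}r_j\ge r_i$. Then for all $t\in\mathbb N$, $$\mathbf m^t\le\mathbf m^{t+1}\quad\text{and}\quad \mathbb E[\mathcal L(\mathbf X^t)]\le\mathbb E[\mathcal L(\mathbf X^{t+1})],$$ and consequently $\mathbf m\ge\mathbf r$ and $\mathbb E[\mathcal L(\mathbf X^\infty)]\ge\mathbb E[\mathcal L(\mathbf X^0)]$. Moreover, for every intermediary $i$, if $\alpha_i$ is regarded as a variable in $(0,1)$ with all other parameters fixed, then $\mathbf m$ is differentiable in $\alpha_i$ and $$\frac{\partial\mathbf m}{\partial\alpha_i}=(\mathbf I-\mathbf A\mathbf W)^{-1}\,\mathbf e_i\mathbf e_i^\top\,\big[\mathbf W\mathbf m-\mathbf r\big]\ \ge\ \mathbf 0,$$ where $\mathbf e_i$ is the $i$-th standard basis vector (so $\mathbf e_i\mathbf e_i^\top=\partial\mathbf A/\partial\alpha_i$).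
   Context: A contractor network is a finite directed graph $G=(\mathcal V,\mathcal E)$ with $n=|\mathcal V|$ nodes, without multiple edges (self-loops and directed cycles allowed), in which every node has at least one incident edge. For $i\in\mathcal V$ let $\delta_{\mathrm{in}}(i)=\{j:(j,i)\in\mathcal E\}$ and $\delta_{\mathrm{out}}(i)=\{k:(i,k)\in\mathcal E\}$. A node $i$ is a pure principal if $\delta_{\mathrm{in}}(i)=\emptyset$, a pure obligee if $\delta_{\mathrm{out}}(i)=\emptyset$, and an intermediary otherwise. Each edge $(j,i)\in\mathcal E$ carries a weight $w_{ij}>0$; $w_{ij}=0$ if $(j,i)\notin\mathcal E$; for every $i$ with $\delta_{\mathrm{in}}(i)\neq\emptyset$, $\sum_{j\in\delta_{\mathrm{in}}(i)}w_{ij}=1$; $\mathbf W=(w_{ij})$. Risk scores: $r_i\in(0,1)$ if $i$ is not a pure obligee and $r_i=0$ for pure obligees; $\mathbf r=(r_i)$. Propagation parameters: $\alpha_i=0$ for pure principals, $\alpha_i=1$ for pure obligees, $\alpha_i\in(0,1)$ for intermediaries; $\mathbf A=\mathrm{diag}(\alpha_i)$. Failure process $(\mathbf X^t)_{t\in\mathbb N}$ on $\{0,1\}^n$: the $X_i^0$ are independent $\mathrm{Bernoulli}(r_i)$; for $t\ge0$, conditionally on $(\mathbf X^0,\dots,\mathbf X^t)$ the $X_i^{t+1}$ are independent with $X_i^{t+1}\sim\mathrm{Bernoulli}\big((1-\alpha_i)r_i+\alpha_i\sum_{j\in\delta_{\mathrm{in}}(i)}w_{ij}X_j^t\big)$.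 $m_i^t=\mathbb E[X_i^t]$, $\mathbf m^t=(m_i^t)$, and $\mathbf m=\lim_t\mathbf m^t$, which exists and equals $(\mathbf I-\mathbf A\mathbf W)^{-1}(\mathbf I-\mathbf A)\mathbf r$ (with $\mathbf I-\mathbf A\mathbf W$ invertible). Losses: $\beta_i\ge0$ for each node, with $\beta_i=0$ for pure obligees; $\mathcal L(\mathbf x)=\sum_i\beta_ix_i=\beta^\top\mathbf x$, and $\mathbb E[\mathcal L(\mathbf X^\infty)]:=\lim_{t\to\infty}\mathbb E[\mathcal L(\mathbf X^t)]=\beta^\top\mathbf m$. Vector inequalities are entrywise. *)

From HB Require Import structures.
From mathcomp Require Import all_boot all_order all_algebra.
From mathcomp Require Import all_classical all_reals all_analysis.
Set Implicit Arguments. Unset Strict Implicit. Unset Printing Implicit Defensive.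
Import Order.TTheory GRing.Theory Num.Theory.
Local Open Scope ring_scope.

Section ContractorNetwork.
Variables (R : realType) (n : nat).

(* Directed graph on 'I_n: [E j i] means the edge (j,i) is present. *)
Definition pure_principal (E : rel 'I_n) (i : 'I_n) : bool := [forall j, ~~ E j i].
Definition pure_obligee (E : rel 'I_n) (i : 'I_n) : bool := [forall k, ~~ E i k].
Definition intermediary (E : rel 'I_n) (i : 'I_n) : bool :=
  ~~ pure_principal E i && ~~ pure_obligee E i.

Definition contractor_network (E : rel 'I_n) (W : 'M[R]_n) (r alpha beta : 'I_n -> R) : Prop :=
  ((forall i, exists j, E j i || E i j)) /\
  ((forall i j, E j i -> 0 < W i j) /\ (forall i j, ~~ E j i -> W i j = 0) /\
   (forall i, ~~ pure_principal E i -> \sum_(j < n) W i j = 1)) /\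
  ((forall i, ~~ pure_obligee E i -> 0 < r i < 1) /\
   (forall i, pure_obligee E i -> r i = 0)) /\
  ((forall i, pure_principal E i -> alpha i = 0) /\
   (forall i, pure_obligee E i -> alpha i = 1) /\
   (forall i, intermediary E i -> 0 < alpha i < 1)) /\
  ((forall i, 0 <= beta i) /\ (forall i, pure_obligee E i -> beta i = 0)).

(* Failure process: a Markov chain on {0,1}^n = {ffun 'I_n -> bool}. *)
Definition bern (p : R) (b : bool) : R := if b then p else 1 - p.

Definition state := {ffun 'I_n -> bool}.

Definition law0 (r : 'I_n -> R) (x : state) : R := \prod_(i < n) bern (r i) (x i).

(* success probability of node i at time t+1 given X^t = x *)
Definition pfail (W : 'M[R]_n) (r alpha : 'I_n -> R) (x : state) (i : 'I_n) : R :=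
  (1 - alpha i) * r i + alpha i * \sum_(j < n) W i j * (x j)%:R.

Definition trans (W : 'M[R]_n) (r alpha : 'I_n -> R) (x y : state) : R :=
  \prod_(i < n) bern (pfail W r alpha x i) (y i).

Fixpoint law (W : 'M[R]_n) (r alpha : 'I_n -> R) (t : nat) (y : state) : R :=
  match t with
  | 0 => law0 r y
  | t'.+1 => \sum_(x : state) law W r alpha t' x * trans W r alpha x y
  end.

Definition mt (W : 'M[R]_n) (r alpha : 'I_n -> R) (t : nat) (i : 'I_n) : R :=
  \sum_(x : state) law W r alpha t x * (x i)%:R.

Definition expLoss (W : 'M[R]_n) (r alpha beta : 'I_n -> R) (t : nat) : R :=
  \sum_(x : state) law W r alpha t x * \sum_(i < n) beta i * (x i)%:R.

Definition Amx (alpha : 'I_n -> R) : 'M[R]_n := diag_mx (\row_k alpha k).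
Definition rcol (r : 'I_n -> R) : 'cV[R]_n := \col_k r k.

Definition mlim (W : 'M[R]_n) (r alpha : 'I_n -> R) : 'cV[R]_n :=
  invmx (1%:M - Amx alpha *m W) *m ((1%:M - Amx alpha) *m rcol r).

Definition alpha_upd (alpha : 'I_n -> R) (i : 'I_n) (a : R) : 'I_n -> R :=
  fun k => if k == i then a else alpha k.

End ContractorNetwork.

(* The means satisfy m^(t+1) = (I - A) r + A W m^t.  Since A W >= 0, the
   increments m^(t+1) - m^t = A W (m^t - m^(t-1)) stay nonnegative once
   m^1 - m^0 = A (W r - r) is, and that is the hypothesis.
   For the limit, I - A W obeys a minimum principle: if (I - A W) x >= 0, a
   negative minimum of x can only be attained at a pure obligee, and its
   in-neighbours, over which it averages, would attain it too and so be pure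
   obligees as well, which is absurd.  Hence I - A W is invertible with a
   nonnegative inverse, and (I - A W)(m - r) = A (W r - r) >= 0.
   Changing alpha_i from a to b gives the resolvent identity
   m(b) - m(a) = (b - a) (I - A_b W)^-1 e_i e_i^T (W m(a) - r); the inverse of
   the polynomial matrix I - A_b W is continuous in b, which yields the
   derivative, and its sign is again the minimum principle, as
   (W m - r)_i >= (W r - r)_i >= 0. *)

From HB Require Import structures.
From mathcomp Require Import all_boot all_order all_algebra.
From mathcomp Require Import all_classical all_reals all_analysis.
From mathcomp Require Import ring lra.
Import Order.TTheory GRing.Theory Num.Theory numFieldNormedType.Exports.
Local Open Scope ring_scope.

Set Implicit Arguments. Unset Strict Implicit. Unset Printing Implicit Defensive.

Section ProductBernoulli.
Variables (R : realType) (n : nat).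

Lemma sum_prod_state (G : 'I_n -> bool -> R) :
  \sum_(y : state n) \prod_(i < n) G i (y i) = \prod_(i < n) (G i true + G i false).
Proof. by rewrite -bigA_distr_bigA; apply: eq_bigr => i _; rewrite big_bool. Qed.

Lemma sum_prod_bern (p : 'I_n -> R) :
  \sum_(y : state n) \prod_(i < n) bern (p i) (y i) = 1.
Proof.
by rewrite (sum_prod_state (fun i => bern (p i))) big1 // => i _; rewrite /bern addrC subrK.
Qed.

Lemma mean_prod_bern (p : 'I_n -> R) (k : 'I_n) :
  \sum_(y : state n) (\prod_(i < n) bern (p i) (y i)) * (y k)%:R = p k.
Proof.
pose G i b := bern (p i) b * (if i == k then b%:R else 1).
transitivity (\sum_(y : state n) \prod_(i < n) G i (y i)).
  by apply: eq_bigr => y _; rewrite big_split /= -big_mkcond big_pred1_eq.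
rewrite (sum_prod_state G) (bigD1 k) //= big1 => [|j /negbTE jk].
  by rewrite /G eqxx /bern mulr1 mulr0 addr0 mulr1.
by rewrite /G jk /bern !mulr1 addrC subrK.
Qed.

End ProductBernoulli.

Section Moments.
Variables (R : realType) (n : nat) (W : 'M[R]_n) (r alpha : 'I_n -> R).

Lemma sum_law t : \sum_(x : state n) law W r alpha t x = 1.
Proof.
elim: t => [|t IH] /=; first exact: sum_prod_bern.
rewrite exchange_big /= -[RHS]IH; apply: eq_bigr => x _.
by rewrite -mulr_sumr /trans sum_prod_bern mulr1.
Qed.

Lemma mt0 k : mt W r alpha 0 k = r k.
Proof. exact: mean_prod_bern. Qed.

Lemma mtS t k : mt W r alpha t.+1 k =
  (1 - alpha k) * r k + alpha k * \sum_(j < n) W k j * mt W r alpha t j.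
Proof.
transitivity (\sum_(x : state n) law W r alpha t x * pfail W r alpha x k).
  rewrite /mt /=; under eq_bigr do rewrite big_distrl /=.
  rewrite exchange_big; apply: eq_bigr => x _ /=.
  rewrite -(mean_prod_bern (pfail W r alpha x)) mulr_sumr.
  by apply: eq_bigr => y _; rewrite mulrA.
rewrite /pfail; under eq_bigr do rewrite mulrDr [_ * (_ * r k)]mulrC mulrCA.
rewrite big_split -!mulr_sumr sum_law mulr1; congr (_ + _ * _).
under eq_bigr do rewrite mulr_sumr; rewrite exchange_big; apply: eq_bigr => j _ /=.
by rewrite /mt mulr_sumr; apply: eq_bigr => x _; rewrite mulrCA.
Qed.

Lemma expLossE beta t :
  expLoss W r alpha beta t = \sum_(i < n) beta i * mt W r alpha t i.
Proof.
rewrite /expLoss /mt; under eq_bigr do rewrite mulr_sumr.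
rewrite exchange_big; apply: eq_bigr => i _ /=.
by rewrite mulr_sumr; apply: eq_bigr => x _; rewrite mulrCA.
Qed.

End Moments.

Section RealCalculus.
Variable R : realType.
Local Open Scope classical_set_scope.

Lemma is_derive_slope (f g : R -> R) (a : R) :
  (\forall b \near a, f b - f a = (b - a) * g b) -> {for a, continuous g} ->
  is_derive a 1 f (g a).
Proof.
move=> f_slope g_cont.
have quot_cvg : (fun h : R => h^-1 *: ((f \o shift a) (h *: 1) - f a)) @ 0^' --> g a.
  have g_shift : (g \o shift a) @ 0^' --> g a.
    by apply: cvg_within_filter; rewrite cvg_comp_shift add0r.
  apply: cvg_trans g_shift; apply: near_eq_cvg.
  have : \forall h \near (0:R), f (h + a) - f a = h * g (h + a).
    rewrite (near_shift 0 a) in f_slope.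
    by move: f_slope; apply: filterS => h /=; rewrite subr0 addrK.
  move=> /(@nbhs_dnbhs _ 0); apply: filter_app; near=> h => /=.
  rewrite /GRing.scale /= mulr1 => ->; rewrite mulrA mulVf ?mul1r //.
  by near: h; exact: nbhs_dnbhs_neq.
by apply: DeriveDef; [apply/cvgP: quot_cvg | apply: cvg_lim].
Unshelve. all: by end_near. Qed.

Lemma continuous_invmx_horner (n : nat) (P : 'M[{poly R}]_n) (v : 'cV[R]_n)
    (k : 'I_n) (a : R) :
  map_mx (horner_eval a) P \in unitmx ->
  {for a, continuous (fun b : R => (invmx (map_mx (horner_eval b) P) *m v) k 0)}.
Proof.
pose N := \sum_(l < n) (\adj P) k l * (v l 0)%:P.
have invmxE b : (\det P).[b] != 0 ->
    (invmx (map_mx (horner_eval b) P) *m v) k 0 = N.[b] / (\det P).[b].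
  move=> det_b; rewrite /invmx unitmxE det_map_mx /= unitfE det_b -map_mx_adj.
  rewrite -scalemxAl mxE horner_sum big_distrl mxE mulr_sumr /=.
  apply: eq_bigr => l _.
  by rewrite !mxE hornerM hornerC !horner_evalE mulrC.
rewrite unitmxE det_map_mx /= unitfE horner_evalE => det_a.
have near_det : \forall b \near a, (\det P).[b] != 0.
  exact: cvgr_neq0 _ (@continuous_horner _ (\det P) a) det_a.
rewrite /continuous_at; apply: (@cvg_trans _ ((fun b => N.[b] / (\det P).[b]) @ a)).
  by apply: near_eq_cvg; apply: filterS near_det => b /invmxE->.
rewrite invmxE //; apply: (cvgM (@continuous_horner _ N a)).
by apply: cvgV => //; exact: continuous_horner.
Qed.

End RealCalculus.

Lemma unitmx_of_mulmx_eq0 (F : fieldType) (n : nat) (A : 'M[F]_n) :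
  (forall x : 'cV[F]_n, A *m x = 0 -> x = 0) -> A \in unitmx.
Proof.
move=> A_inj; rewrite -unitmx_tr -row_free_unit; apply: inj_row_free => v vA0.
apply: trmx_inj; rewrite trmx0; apply: A_inj.
by rewrite -[A]trmxK -trmx_mul vA0 trmx0.
Qed.

Lemma delta_mx_mulmx_entry (R : pzRingType) (n : nat) (i l : 'I_n) (y : 'cV[R]_n) :
  (delta_mx i i *m y) l 0 = if l == i then y i 0 else 0.
Proof.
rewrite mxE (bigD1 i) //= big1 => [|j /negbTE ji]; last by rewrite !mxE ji andbF mul0r.
by rewrite !mxE eqxx andbT addr0; case: (l == i); rewrite ?mul1r ?mul0r.
Qed.

Section Network.
Variables (R : realType) (n : nat) (E : rel 'I_n) (W : 'M[R]_n).
Hypothesis node_incident : forall i, exists j, E j i || E i j.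
Hypothesis W_gt0 : forall i j, E j i -> 0 < W i j.
Hypothesis W_eq0 : forall i j, ~~ E j i -> W i j = 0.
Hypothesis W_row_sum : forall i, ~~ pure_principal E i -> \sum_(j < n) W i j = 1.

Definition admissible_alpha (alpha : 'I_n -> R) :=
  [/\ forall i, pure_principal E i -> alpha i = 0,
      forall i, pure_obligee E i -> alpha i = 1 &
      forall i, intermediary E i -> 0 < alpha i < 1].

Local Notation IAW alpha := (1%:M - Amx alpha *m W).

Lemma W_ge0 i j : 0 <= W i j.
Proof. by case: (boolP (E j i)) => [/W_gt0/ltW | /W_eq0->]. Qed.

Lemma nodeP k : [\/ pure_principal E k, pure_obligee E k | intermediary E k].
Proof.
rewrite /intermediary; case: (boolP (pure_principal E k)) => [|pp]; first by constructor 1.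
by case: (boolP (pure_obligee E k)) => [|po]; [constructor 2 | constructor 3].
Qed.

Lemma admissible_alpha_ge0 alpha : admissible_alpha alpha -> forall k, 0 <= alpha k.
Proof.
case=> alpha_pp alpha_po alpha_im k.
by case: (nodeP k) => [/alpha_pp-> | /alpha_po-> | /alpha_im/andP[/ltW]].
Qed.

Lemma IAW_mulmx_entry alpha (x : 'cV[R]_n) k :
  (IAW alpha *m x) k 0 = x k 0 - alpha k * \sum_(j < n) W k j * x j 0.
Proof. by rewrite mulmxBl mul1mx -mulmxA mul_diag_mx !mxE. Qed.

Section WeightedAverage.
Variables (x : 'cV[R]_n) (m : 'I_n).
Hypothesis x_min : forall j, x m 0 <= x j 0.

Lemma min_le_wavg k : ~~ pure_principal E k -> x m 0 <= \sum_(j < n) W k j * x j 0.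
Proof.
move=> k_pp; rewrite -[x m 0]mul1r -(W_row_sum k_pp) big_distrl /=.
by apply: ler_sum => j _; apply: ler_wpM2l; [exact: W_ge0 | exact: x_min].
Qed.

Lemma wavg_le_min_eq k j : ~~ pure_principal E k ->
  \sum_(l < n) W k l * x l 0 <= x m 0 -> E j k -> x j 0 = x m 0.
Proof.
move=> k_pp avg_le Ejk; apply/eqP; rewrite eq_le x_min andbT.
have : \sum_(l < n) W k l * (x l 0 - x m 0) <= 0.
  under eq_bigr do rewrite mulrBr.
  by rewrite sumrB -big_distrl /= (W_row_sum k_pp) mul1r subr_le0.
rewrite (bigD1 j) //= => sum_le0.
have : W k j * (x j 0 - x m 0) <= 0.
  apply: le_trans sum_le0; rewrite lerDl; apply: sumr_ge0 => l _.
  by apply: mulr_ge0; [exact: W_ge0 | rewrite subr_ge0].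
by rewrite pmulr_rle0 ?subr_le0 // W_gt0.
Qed.

Lemma negative_min_pure_obligee alpha : admissible_alpha alpha ->
  (forall k, 0 <= (IAW alpha *m x) k 0) -> x m 0 < 0 ->
  forall k, x k 0 = x m 0 -> pure_obligee E k.
Proof.
case=> alpha_pp _ alpha_im IAWx_ge0 xm_lt0 k xk.
have := IAWx_ge0 k; rewrite IAW_mulmx_entry xk.
case: (nodeP k) => [/alpha_pp-> | // | k_im]; first by rewrite mul0r subr0 leNgt xm_lt0.
have k_pp : ~~ pure_principal E k by case/andP: k_im.
have := min_le_wavg k_pp; case/andP: (alpha_im _ k_im) => a_gt0 a_lt1; nra.
Qed.

End WeightedAverage.

Lemma IAW_min_principle alpha (x : 'cV[R]_n) : admissible_alpha alpha ->
  (forall k, 0 <= (IAW alpha *m x) k 0) -> forall k, 0 <= x k 0.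
Proof.
move=> adm IAWx_ge0 k0; rewrite leNgt; apply/negP => xk0_lt0.
case: (@arg_minP _ _ _ k0 xpredT (fun k => x k 0) isT) => m _ x_min_pred.
have x_min j : x m 0 <= x j 0 := x_min_pred j isT.
have xm_lt0 : x m 0 < 0 := le_lt_trans (x_min k0) xk0_lt0.
have m_po := negative_min_pure_obligee x_min adm IAWx_ge0 xm_lt0.
case: (adm) => alpha_pp alpha_po _.
have m_pp : ~~ pure_principal E m.
  by apply/negP => /alpha_pp; rewrite alpha_po ?m_po //; apply/eqP; rewrite oner_eq0.
have [j /orP[Ejm | Emj]] := node_incident m; last first.
  by move/forallP: (m_po m erefl) => /(_ j); rewrite Emj.
have := IAWx_ge0 m; rewrite IAW_mulmx_entry alpha_po ?m_po // mul1r subr_ge0 => avg_le.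
move/forallP: (m_po j (wavg_le_min_eq x_min m_pp avg_le Ejm)) => /(_ m).
by rewrite Ejm.
Qed.

Lemma IAW_unit alpha : admissible_alpha alpha -> IAW alpha \in unitmx.
Proof.
move=> adm; apply: unitmx_of_mulmx_eq0 => x IAWx0; apply/matrixP => k j.
rewrite ord1 mxE; apply/eqP; rewrite eq_le; apply/andP; split.
  have := IAW_min_principle (x := - x) adm _ k; rewrite mxE oppr_ge0; apply=> l.
  by rewrite mulmxN IAWx0 oppr0 mxE.
by apply: (IAW_min_principle adm) => l; rewrite IAWx0 mxE.
Qed.

Lemma IAW_mlim r alpha : admissible_alpha alpha ->
  IAW alpha *m mlim W r alpha = (1%:M - Amx alpha) *m rcol r.
Proof. by move=> adm; rewrite mulKVmx // IAW_unit. Qed.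

Section AlphaUpdate.
Variables (r alpha : 'I_n -> R) (i : 'I_n).
Hypotheses (adm : admissible_alpha alpha) (i_im : intermediary E i).

Lemma admissible_alpha_upd a : 0 < a < 1 -> admissible_alpha (alpha_upd alpha i a).
Proof.
case: adm => alpha_pp alpha_po alpha_im a01.
split=> k k_type; rewrite /alpha_upd; case: eqP => [ki | _]; subst.
- by move: i_im; rewrite /intermediary k_type.
- exact: alpha_pp.
- by move: i_im; rewrite /intermediary k_type andbF.
- exact: alpha_po.
- exact: a01.
- exact: alpha_im.
Qed.

Lemma Amx_alpha_upd a b :
  Amx (alpha_upd alpha i b) = Amx (alpha_upd alpha i a) + (b - a) *: delta_mx i i.
Proof.
apply/matrixP => k l; rewrite !mxE /alpha_upd.
case: (eqVneq k i) => [ki|ki]; case: (eqVneq l i) => [li|li] /=; subst.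
- by rewrite eqxx /= !mulr1n mulr1 addrC subrK.
- by rewrite eq_sym (negbTE li) !mulr0n mulr0 addr0.
- by rewrite mulr0 addr0.
- by rewrite mulr0 addr0.
Qed.

Lemma IAW_alpha_upd_poly :
  exists P : 'M[{poly R}]_n, forall b, map_mx (horner_eval b) P = IAW (alpha_upd alpha i b).
Proof.
exists (map_mx polyC (IAW (alpha_upd alpha i 0)) - 'X *: map_mx polyC (delta_mx i i *m W)).
move=> b; rewrite (Amx_alpha_upd 0 b) subr0 mulmxDl -scalemxAl opprD addrA.
apply/matrixP => k l; rewrite !mxE horner_evalE.
by rewrite hornerD hornerN hornerM hornerX !hornerC.
Qed.

Local Notation m b := (mlim W r (alpha_upd alpha i b)).
Local Notation dA_residual a := (delta_mx i i *m (W *m m a - rcol r)).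

Lemma mlim_alpha_upd_sub a b : 0 < a < 1 -> 0 < b < 1 ->
  m b - m a = (b - a) *: (invmx (IAW (alpha_upd alpha i b)) *m dA_residual a).
Proof.
move=> a01 b01; have adm_a := admissible_alpha_upd a01.
have adm_b := admissible_alpha_upd b01.
have Ab := Amx_alpha_upd a b; set D := delta_mx i i in Ab *.
have IA_b :
    1%:M - Amx (alpha_upd alpha i b) = 1%:M - Amx (alpha_upd alpha i a) - (b - a) *: D.
  by rewrite Ab opprD addrA.
have IAW_b : IAW (alpha_upd alpha i b) = IAW (alpha_upd alpha i a) - (b - a) *: (D *m W).
  by rewrite Ab mulmxDl -scalemxAl opprD addrA.
rewrite -[m b - m a](mulKmx (IAW_unit adm_b)) scalemxAr; congr (_ *m _).
rewrite mulmxBr IAW_mlim // IAW_b IA_b (mulmxBl (IAW _)) (mulmxBl (1%:M - _)).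
rewrite IAW_mlim // -!scalemxAl -mulmxA.
by rewrite opprB addrC addrA subrK mulmxBr scalerBr.
Qed.

Lemma is_derive_mlim_alpha_upd (a : R) k : 0 < a < 1 ->
  is_derive a 1 (fun b : R => m b k 0)
    ((invmx (IAW (alpha_upd alpha i a)) *m dA_residual a) k 0).
Proof.
move=> a01; have [P P_eval] := IAW_alpha_upd_poly.
pose g b := (invmx (map_mx (horner_eval b) P) *m dA_residual a) k 0.
rewrite -P_eval -/(g a); apply: is_derive_slope; last first.
  apply: continuous_invmx_horner; rewrite P_eval.
  exact: IAW_unit (admissible_alpha_upd a01).
have : \forall b \near a, 0 < b < 1.
  by have := near_in_itvoo a01; apply: filterS => b; rewrite in_itv.
apply: filterS => b b01; rewrite /g P_eval.
have -> : m b k 0 - m a k 0 = (m b - m a) k 0 by rewrite !mxE.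
by rewrite mlim_alpha_upd_sub // mxE.
Qed.

End AlphaUpdate.

Section Risks.
Variable r : 'I_n -> R.
Hypothesis r_in01 : forall i, ~~ pure_obligee E i -> 0 < r i < 1.
Hypothesis r_obligee : forall i, pure_obligee E i -> r i = 0.
Hypothesis r_le_Wr : forall i, intermediary E i -> r i <= \sum_(j < n) W i j * r j.

Lemma r_ge0 i : 0 <= r i.
Proof. by case: (boolP (pure_obligee E i)) => [/r_obligee-> | /r_in01/andP[/ltW]]. Qed.

Lemma increment_ge0 alpha : admissible_alpha alpha -> forall k,
  0 <= alpha k * (\sum_(j < n) W k j * r j - r k).
Proof.
move=> adm k; case: (adm) => alpha_pp alpha_po _.
case: (nodeP k) => [/alpha_pp-> | k_po | k_im].
- by rewrite mul0r.
- rewrite alpha_po // r_obligee // subr0 mul1r; apply: sumr_ge0 => j _.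
  exact: mulr_ge0 (W_ge0 _ _) (r_ge0 _).
- by rewrite mulr_ge0 ?admissible_alpha_ge0 ?subr_ge0 ?r_le_Wr.
Qed.

Lemma mt_nondecreasing alpha : admissible_alpha alpha ->
  forall t k, mt W r alpha t k <= mt W r alpha t.+1 k.
Proof.
move=> adm; elim=> [|t IH] k.
  rewrite mtS mt0 -subr_ge0; under eq_bigr do rewrite mt0.
  by have := increment_ge0 adm k; congr (_ <= _); ring.
rewrite (mtS _ _ _ t.+1) mtS lerD2l; apply: ler_wpM2l; first exact: admissible_alpha_ge0.
by apply: ler_sum => j _; apply: ler_wpM2l; [exact: W_ge0 | exact: IH].
Qed.

Lemma mlim_ge_r alpha : admissible_alpha alpha -> forall k, r k <= mlim W r alpha k 0.
Proof.
move=> adm k; have := IAW_min_principle (x := mlim W r alpha - rcol r) adm _ k.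
rewrite !mxE subr_ge0; apply=> l.
have -> : IAW alpha *m (mlim W r alpha - rcol r) = Amx alpha *m (W *m rcol r - rcol r).
  rewrite mulmxBr IAW_mlim // !mulmxBl !mul1mx mulmxBr mulmxA.
  by rewrite opprB addrC addrA subrK.
rewrite mul_diag_mx !mxE; under eq_bigr do rewrite mxE.
exact: increment_ge0.
Qed.

Lemma mlim_alpha_upd_slope_ge0 alpha i a k :
  admissible_alpha alpha -> intermediary E i -> 0 < a < 1 ->
  0 <= (invmx (IAW (alpha_upd alpha i a)) *m
        (delta_mx i i *m (W *m mlim W r (alpha_upd alpha i a) - rcol r))) k 0.
Proof.
move=> adm i_im a01; have adm_a := admissible_alpha_upd adm i_im a01.
apply: (IAW_min_principle adm_a) => l.
rewrite mulKVmx ?IAW_unit // delta_mx_mulmx_entry; case: eqP => // _.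
rewrite !mxE subr_ge0; apply: le_trans (r_le_Wr i_im) _.
apply: ler_sum => j _; apply: ler_wpM2l; first exact: W_ge0.
by have := mlim_ge_r adm_a j; rewrite mxE.
Qed.

End Risks.

End Network.

Theorem mainTheorem6 (R : realType) (n : nat) (E : rel 'I_n) (W : 'M[R]_n)
    (r alpha beta : 'I_n -> R) :
  contractor_network E W r alpha beta ->
  (forall i, intermediary E i -> r i <= \sum_(j < n) W i j * r j) ->
  [/\ (forall t i, mt W r alpha t i <= mt W r alpha t.+1 i),
      (forall t, expLoss W r alpha beta t <= expLoss W r alpha beta t.+1),
      (forall i, r i <= mlim W r alpha i 0),
      expLoss W r alpha beta 0 <= \sum_(i < n) beta i * mlim W r alpha i 0
    & forall i, intermediary E i -> forall a : R, 0 < a < 1 ->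
        let Aa := Amx (alpha_upd alpha i a) in
        let dm := invmx (1%:M - Aa *m W) *m
                  (delta_mx i i *m (W *m mlim W r (alpha_upd alpha i a) - rcol r)) in
        forall k : 'I_n,
          is_derive a 1 (fun b : R => mlim W r (alpha_upd alpha i b) k 0) (dm k 0)
          /\ 0 <= dm k 0].
Proof.
move=> [incident [[W_gt0 [W_eq0 W_row_sum]] [[r_in01 r_obligee]
  [[alpha_pp [alpha_po alpha_im]] [beta_ge0 _]]]]] r_le_Wr.
have adm : admissible_alpha E alpha by [].
have mt_mono := mt_nondecreasing W_gt0 W_eq0 r_in01 r_obligee r_le_Wr adm.
have m_ge_r := mlim_ge_r incident W_gt0 W_eq0 W_row_sum r_in01 r_obligee r_le_Wr adm.
split=> [|t||| i i_im a a01 Aa dm k].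
- exact: mt_mono.
- rewrite !expLossE; apply: ler_sum => j _.
  by apply: ler_wpM2l; [exact: beta_ge0 | exact: mt_mono].
- exact: m_ge_r.
- rewrite expLossE; apply: ler_sum => j _; rewrite mt0.
  by apply: ler_wpM2l; [exact: beta_ge0 | exact: m_ge_r].
- split; first exact: is_derive_mlim_alpha_upd.
  exact: mlim_alpha_upd_slope_ge0.
Qed.
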